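(* In the Rustichini setting, let $\epsilon>0$ and $\mathcal G\subset\mathcal F$, let $\Pi=\{\pi\in\Delta_k:\operatorname{dist}_1(\pi,\mathcal N(F))\ge\epsilon\text{ for all nonempty }F\in\mathcal G\}$, and assume $U=\bigcup_{F\in\mathcal F\setminus\mathcal G}F$ is nonempty. Define $f,g:\mathcal K\to[0,\infty]$ by $f(x)=\inf_{\pi\in\Pi}\Delta(\pi,x)$ (with $\inf\emptyset=+\infty$) and $g(x)=\operatorname{dist}_1(x,U)$. Then there is a constant $c_\epsilon>0$, depending only on the game, $\epsilon$ and $\mathcal G$, such that $f(x)\ge c_\epsilon\, g(x)$ for all $x\in\mathcal K$.
   Context: Rustichini setting: a $k$-action partial monitoring game with finite latent space $\mathcal Z$, loss $\mathcal L:[k]\times\mathcal Z\to[0,1]$, signal $\mathcal S:[k]\times\mathcal Z\to\Sigma$; $\mathcal K$ = probability simplex on $\mathcal Z$; $\Delta_k$ = probability simplex on $[k]$; $\mathcal L(\pi,x)=\sum_{a,z}\pi(a)x(z)\mathcal L(a,z)$; $\mathcal S(a,x)$ = law of $\mathcal S(a,z)$, $z\sim x$; $x\,\mathrm R\,y$ iff $\mathcal S(a,x)=\mathcal S(a,y)$ for all $a$; $\mathcal V(\pi,x)=\sup_{y\,\mathrm R\,x}\mathcal L(\pi,y)$; $\mathcal V_\star(x)=\min_{\pi\in\Delta_k}\mathcal V(\pi,x)$; $\Delta(\pi,x)=\mathcal V(\pi,x)-\mathcal V_\star(x)$. $m$ is the smallest integer with $\mathcal V_\star(x)=\min_{\alpha\in[m]}\mathcal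 V^m(x)_\alpha$ for some linear $\mathcal V^m:\mathcal K\to\mathbb R^m$; cells $P_\alpha=\{x\in\mathcal K:\mathcal V_\star(x)=\mathcal V^m(x)_\alpha\}$; $\mathcal F=\bigcup_{\alpha\in[m]}\operatorname{faces}(P_\alpha)$. $\mathcal N(x)=\{\pi\in\Delta_k:\Delta(\pi,x)=0\}$; for nonempty $F\in\mathcal F$, $\mathcal N(F)=\mathcal N(x)$ for any $x$ in the relative interior of $F$ (independent of the choice). $\operatorname{dist}_1(x,C)=\inf_{y\in C}\|x-y\|_1$. *)

From HB Require Import structures.
From mathcomp Require Import all_boot all_order all_algebra.
From mathcomp Require Import all_classical all_reals.
From mathcomp Require Import ereal.
Import Order.TTheory GRing.Theory Num.Theory.
Set Implicit Arguments. Unset Strict Implicit. Unset Printing Implicit Defensive.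
Local Open Scope ring_scope.
Local Open Scope classical_set_scope.

Definition norm1 (R : realType) (T : finType) (u v : T -> R) : R :=
  \sum_(t : T) `|u t - v t|.

Definition dist1 (R : realType) (T : finType) (p : T -> R) (C : set (T -> R)) : \bar R :=
  ereal_inf [set (norm1 p q)%:E | q in C].

Definition simplex (R : realType) (T : finType) : set (T -> R) :=
  [set x | (forall t, 0 <= x t) /\ \sum_(t : T) x t = 1].

Definition dotp (R : realType) (T : finType) (a x : T -> R) : R := \sum_(t : T) a t * x t.

Definition aff (R : realType) (T : finType) (F : set (T -> R)) : set (T -> R) :=
  [set y | exists (n : nat) (p : 'I_n -> T -> R) (lam : 'I_n -> R),
      (forall i, F (p i)) /\ \sum_(i < n) lam i = 1 /\
      y = (fun t => \sum_(i < n) lam i * p i t)].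

Definition relint (R : realType) (T : finType) (F : set (T -> R)) : set (T -> R) :=
  [set x | F x /\ exists e : R, 0 < e /\
      forall y, aff F y -> norm1 x y < e -> F y].

(* faces of a (convex polyhedral) set P: intersections with supporting
   hyperplanes; includes P itself (a = 0, b = 0) and the empty face. *)
Definition face (R : realType) (T : finType) (P F : set (T -> R)) : Prop :=
  exists (a : T -> R) (b : R), (forall y, P y -> dotp a y <= b) /\
    F = P `&` [set y | dotp a y = b].

Section Rustichini.
Variables (R : realType) (k : nat) (Z : finType) (Sig : eqType)
  (L : 'I_k -> Z -> R) (S : 'I_k -> Z -> Sig).

Definition lossp (pi : 'I_k -> R) (x : Z -> R) : R :=
  \sum_(a < k) \sum_(z : Z) pi a * x z * L a z.

(* x R y : S(a,x) = S(a,y) for all a (equal laws of the signal) *)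
Definition sigrel (x y : Z -> R) : Prop :=
  forall (a : 'I_k) (s : Sig),
    \sum_(z : Z | S a z == s) x z = \sum_(z : Z | S a z == s) y z.

Definition Vf (pi : 'I_k -> R) (x : Z -> R) : R :=
  sup [set lossp pi y | y in [set y | simplex y /\ sigrel y x]].

Definition Vstar (x : Z -> R) : R := inf [set Vf pi x | pi in @simplex R 'I_k].

Definition Delta (pi : 'I_k -> R) (x : Z -> R) : R := Vf pi x - Vstar x.

Definition Nset (x : Z -> R) : set ('I_k -> R) :=
  [set pi | simplex pi /\ Delta pi x = 0].

Definition Vm (m : nat) (w : 'I_m -> Z -> R) (x : Z -> R) (al : 'I_m) : R :=
  \sum_(z : Z) x z * w al z.

Definition represents (m : nat) (w : 'I_m -> Z -> R) : Prop :=
  forall x, simplex x ->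
    (exists al, Vstar x = Vm w x al) /\ (forall al, Vstar x <= Vm w x al).

Definition minimal_rep (m : nat) (w : 'I_m -> Z -> R) : Prop :=
  represents w /\ forall m' (w' : 'I_m' -> Z -> R), represents w' -> (m <= m')%N.

Definition cell (m : nat) (w : 'I_m -> Z -> R) (al : 'I_m) : set (Z -> R) :=
  [set x | simplex x /\ Vstar x = Vm w x al].

Definition faces (m : nat) (w : 'I_m -> Z -> R) : set (set (Z -> R)) :=
  [set F | exists al, face (cell w al) F].

Definition NF (F : set (Z -> R)) : set ('I_k -> R) :=
  Nset (xget (fun _ => 0) (relint F)).

Definition PiSet (eps : R) (G : set (set (Z -> R))) : set ('I_k -> R) :=
  [set pi | simplex pi /\
     forall F, G F -> F !=set0 -> (eps%:E <= dist1 pi (NF F))%E].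

Definition Uset (m : nat) (w : 'I_m -> Z -> R) (G : set (set (Z -> R))) : set (Z -> R) :=
  \bigcup_(F in [set F | faces w F /\ ~ G F]) F.

Definition ffun (eps : R) (G : set (set (Z -> R))) (x : Z -> R) : \bar R :=
  ereal_inf [set (Delta pi x)%:E | pi in PiSet eps G].

Definition gfun (m : nat) (w : 'I_m -> Z -> R) (G : set (set (Z -> R))) (x : Z -> R) : \bar R :=
  dist1 x (Uset w G).

End Rustichini.

(* Each cell P_alpha is the polytope of the simplex cut out by the inequalities
   V^m(x)_alpha <= V^m(x)_beta; on it V_star is linear and V(pi, .) is concave,
   so Delta(pi, .) is concave and nonnegative.  For a relative interior point
   x0 of a face F, concavity forces N(x0) to be contained in N(x) for every x
   in F, so every pi in Pi is eps-far from N(x0); by compactness of Delta_k and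
   the 1-Lipschitz dependence of Delta on pi, Delta(pi, x0) >= d_F > 0 when F
   is in G, while faces outside G lie in U.  One then inducts on the number of
   slack constraints: a point x with the same tight constraints as x0 is a
   mixture t b + (1 - t) x0 with b on a smaller face, and concavity of Delta
   together with the 1-Lipschitz property of g carries the bound from b and x0
   over to x. *)

From HB Require Import structures.
From mathcomp Require Import all_boot all_order all_algebra.
From mathcomp Require Import all_classical all_reals.
From mathcomp Require Import ereal topology normedtype.
From mathcomp Require Import ring lra.
Import Order.TTheory GRing.Theory Num.Theory.
Set Implicit Arguments. Unset Strict Implicit. Unset Printing Implicit Defensive.
Local Open Scope ring_scope.
Local Open Scope classical_set_scope.

Lemma fin_uniform_pos (R : realType) (I : finType) (P : I -> R -> Prop) :
  (forall i c c', 0 < c' -> c' <= c -> P i c -> P i c') ->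
  (forall i, exists2 c, 0 < c & P i c) -> exists2 c, 0 < c & forall i, P i c.
Proof.
move=> P_mono P_pos; have [c c_spec] := choice (fun i =>
  let: ex_intro2 c c0 Pc := P_pos i in ex_intro _ c (conj c0 Pc)).
have cmin0 : 0 < \big[Order.min/1]_i c i.
  by apply: lt_bigmin => // i _; case: (c_spec i).
exists (\big[Order.min/1]_i c i) => // i; have [ci0 Pci] := c_spec i.
exact: P_mono cmin0 (bigmin_le _ _ _) Pci.
Qed.

Section SimplexGeometry.
Variables (R : realType) (T : finType).
Implicit Types (x y z : T -> R) (C : set (T -> R)).

Definition mix (t : R) x y : T -> R := fun i => t * x i + (1 - t) * y i.

Lemma simplex_le1 x : simplex x -> forall i, x i <= 1.
Proof.
move=> [x0 x1] i; rewrite -x1 (bigD1 i) //= lerDl.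
by apply: sumr_ge0 => j _.
Qed.

Lemma norm1_ge0 x y : 0 <= norm1 x y.
Proof. by apply: sumr_ge0 => i _. Qed.

Lemma norm1xx x : norm1 x x = 0.
Proof. by rewrite /norm1 big1 // => i _; rewrite subrr normr0. Qed.

Lemma norm1C x y : norm1 x y = norm1 y x.
Proof. by apply: eq_bigr => i _; rewrite distrC. Qed.

Lemma norm1_triangle x y z : norm1 x z <= norm1 x y + norm1 y z.
Proof.
rewrite /norm1 -big_split; apply: ler_sum => i _.
by rewrite (_ : x i - z i = (x i - y i) + (y i - z i)) ?ler_normD //; ring.
Qed.

Lemma norm1_simplex_le2 x y : simplex x -> simplex y -> norm1 x y <= 2.
Proof.
move=> [x0 x1] [y0 y1]; apply: (le_trans (y := \sum_i (x i + y i))).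
  apply: ler_sum => i _; apply: (le_trans (ler_normB _ _)).
  by rewrite !ger0_norm.
by rewrite big_split /= x1 y1.
Qed.

Lemma dotp_mix (a : T -> R) t x y :
  dotp a (mix t x y) = t * dotp a x + (1 - t) * dotp a y.
Proof.
by rewrite /dotp /mix !mulr_sumr -big_split; apply: eq_bigr => i _ /=; ring.
Qed.

Lemma sum_mix t x y :
  \sum_i mix t x y i = t * \sum_i x i + (1 - t) * \sum_i y i.
Proof. by rewrite /mix big_split /= -!mulr_sumr. Qed.

Lemma simplex_mix t x y : 0 <= t <= 1 ->
  simplex x -> simplex y -> simplex (mix t x y).
Proof.
move=> /andP[t0 t1] [x0 x1] [y0 y1]; split; last by rewrite sum_mix x1 y1; ring.
by move=> i; apply: addr_ge0; apply: mulr_ge0; rewrite ?subr_ge0.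
Qed.

Lemma norm1_mixl t x y : 0 <= t <= 1 -> norm1 (mix t x y) x = (1 - t) * norm1 y x.
Proof.
move=> /andP[_ t1]; rewrite /norm1 mulr_sumr; apply: eq_bigr => i _.
rewrite (_ : mix t x y i - x i = (1 - t) * (y i - x i)) /mix; last by ring.
by rewrite normrM ger0_norm // subr_ge0.
Qed.

Lemma dotpB_le (a : T -> R) x y :
  dotp a y - dotp a x <= (\sum_i `|a i| + 1) * norm1 x y.
Proof.
rewrite /dotp -sumrB /norm1 mulr_sumr; apply: ler_sum => i _.
have ai_le : `|a i| <= \sum_j `|a j| + 1.
  by rewrite (bigD1 i) //= -addrA lerDl addr_ge0 // sumr_ge0.
rewrite -mulrBr distrC; apply: le_trans (ler_norm _) _.
by rewrite normrM ler_wpM2r.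
Qed.

Lemma aff_dotp (F : set (T -> R)) (a : T -> R) v y :
  (forall p, F p -> dotp a p = v) -> aff F y -> dotp a y = v.
Proof.
move=> Fv [n [p [lam [Fp [lam1 ->]]]]].
transitivity (\sum_(j < n) lam j * dotp a (p j)).
  rewrite /dotp (eq_bigr (fun i => \sum_(j < n) a i * (lam j * p j i))); last first.
    by move=> i _; rewrite mulr_sumr.
  rewrite exchange_big; apply: eq_bigr => j _; rewrite mulr_sumr.
  by apply: eq_bigr => i _; ring.
rewrite (eq_bigr (fun j => lam j * v)) => [|j _]; last by rewrite Fv.
by rewrite -mulr_suml lam1 mul1r.
Qed.

Definition concave_on (P : set (T -> R)) (h : (T -> R) -> R) :=
  forall t x y, 0 <= t <= 1 -> P x -> P y ->
    t * h x + (1 - t) * h y <= h (mix t x y).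

Lemma dist1_ge0 x C : (0 <= dist1 x C)%E.
Proof. by apply: le_ereal_inf_tmp => _ [y _ <-]; rewrite lee_fin norm1_ge0. Qed.

Lemma dist1_le_norm1 x y C : C y -> (dist1 x C <= (norm1 x y)%:E)%E.
Proof. by move=> Cy; apply: ereal_inf_lbound; exists y. Qed.

Lemma le_dist1 x C C' : C `<=` C' -> (dist1 x C' <= dist1 x C)%E.
Proof.
move=> CC'; apply: le_ereal_inf_tmp => _ [y Cy <-].
exact/dist1_le_norm1/CC'.
Qed.

Section NonemptyTarget.
Variables (C : set (T -> R)) (C0 : C !=set0).

Lemma dist1_fin_num x : dist1 x C \is a fin_num.
Proof.
have [y Cy] := C0; rewrite ge0_fin_numE ?dist1_ge0 //.
exact: le_lt_trans (dist1_le_norm1 x Cy) (ltry _).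
Qed.

Lemma dist1E x : dist1 x C = (fine (dist1 x C))%:E.
Proof. by rewrite fineK ?dist1_fin_num. Qed.

Lemma fine_dist1_ge0 x : 0 <= fine (dist1 x C).
Proof. by rewrite -lee_fin -dist1E dist1_ge0. Qed.

Lemma fine_dist1_le_norm1 x y : C y -> fine (dist1 x C) <= norm1 x y.
Proof. by move=> Cy; rewrite -lee_fin -dist1E dist1_le_norm1. Qed.

Lemma fine_dist1_in x : C x -> fine (dist1 x C) = 0.
Proof.
move=> Cx; apply/le_anti; rewrite fine_dist1_ge0 andbT -(norm1xx x).
exact: fine_dist1_le_norm1.
Qed.

Lemma fine_dist1_lipschitz x y :
  fine (dist1 x C) <= norm1 x y + fine (dist1 y C).
Proof.
rewrite -lerBlDl -lee_fin -dist1E; apply: le_ereal_inf_tmp => _ [z Cz <-].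
rewrite lee_fin lerBlDl.
exact: le_trans (fine_dist1_le_norm1 x Cz) (norm1_triangle x y z).
Qed.

Lemma fine_dist1_le2 x : C `<=` @simplex R T -> simplex x -> fine (dist1 x C) <= 2.
Proof.
move=> Csx sx; have [y Cy] := C0.
exact: le_trans (fine_dist1_le_norm1 x Cy) (norm1_simplex_le2 sx (Csx _ Cy)).
Qed.

End NonemptyTarget.
End SimplexGeometry.

Section SimplexCompactness.
Variables (R : realType) (T : finType).

Lemma unit_box_cluster (u : nat -> T -> R) : (forall n i, 0 <= u n i <= 1) ->
  exists2 p : T -> R, (forall i, 0 <= p i <= 1) &
    forall r N, 0 < r -> exists2 n, (N <= n)%N & forall i, `|u n i - p i| < r.
Proof.
move=> u01.
pose PT := prod_topology (fun _ : T => R^o).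
have := tychonoff (fun _ : T => @segment_compact R 0 1).
set A := [set f | _] => cA.
pose v : nat -> PT := u.
have /cA [p [Ap clp]] : (v @ \oo) A.
  by exists 0%N => // n _ i /=; rewrite in_itv /= u01.
exists p => [i|r N r0]; first by have := Ap i; rewrite /= in_itv.
have nbp : nbhs (p : PT) [set f : PT | forall i, `|f i - p i| < r].
  have := @filter_forall _ T (fun i (f : PT) => `|f i - p i| < r) (nbhs p) _.
  move=> /(_ _) nb; apply: nb => i.
  have ball_pi : nbhs (p i : R^o) [set y : R^o | `|y - p i| < r].
    by apply/nbhs_ballP; exists r => //= y; rewrite /ball /= distrC.
  exact: (@proj_continuous T (fun _ => R^o) i p _ ball_pi).
have vN : (v @ \oo) [set v n | n in [set n | (N <= n)%N]].
  by exists N => // n /= Nn; exists n.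
have [q [[n /= Nn <-] qr]] := clp _ _ vN nbp.
by exists n.
Qed.

Lemma simplex_cluster (u : nat -> T -> R) : (forall n, simplex (u n)) ->
  exists2 p, simplex p &
    forall r N, 0 < r -> exists2 n, (N <= n)%N & norm1 (u n) p < r.
Proof.
move=> su.
have [|p p01 hp] := @unit_box_cluster u.
  by move=> n i; have [u0 _] := su n; rewrite u0 simplex_le1.
have near_p r N : 0 < r -> exists2 n, (N <= n)%N & norm1 (u n) p < r.
  move=> r0; have card1 : 0 < #|T|%:R + 1 :> R by rewrite ltr_wpDl.
  have [n Nn hn] := hp (r / (#|T|%:R + 1)) N (divr_gt0 r0 card1).
  exists n => //; apply: (le_lt_trans (y := \sum_(i : T) r / (#|T|%:R + 1))).
    by apply: ler_sum => i _; exact/ltW/hn.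
  rewrite sumr_const -[_ *+ _]mulr_natr mulrAC ltr_pdivrMr // mulrDr mulr1.
  by rewrite ltrDl.
exists p => //; split=> [i|]; first by case/andP: (p01 i).
apply/eqP; rewrite -subr_eq0 -normr_le0; apply/ler_addgt0Pr => r r0.
have [n _ hn] := near_p r 0%N r0; have [_ <-] := su n.
rewrite add0r -sumrB; apply: le_trans (ler_norm_sum _ _ _) _.
by rewrite norm1C in hn; exact: ltW.
Qed.

Lemma simplex_gap (h : (T -> R) -> R) (eps : R) : 0 < eps ->
  (forall p, simplex p -> 0 <= h p) ->
  (forall p q, simplex p -> simplex q -> h p <= h q + norm1 p q) ->
  exists2 d : R, 0 < d & forall p, simplex p ->
    (eps%:E <= dist1 p [set q | simplex q /\ h q = 0%R])%E -> d <= h p.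
Proof.
move=> eps0 h_ge0 h_lip; apply: contrapT => nogap.
have seq_small n : exists p, [/\ simplex p,
    (eps%:E <= dist1 p [set q | simplex q /\ h q = 0%R])%E & h p < n.+1%:R^-1].
  apply: contrapT => hn; apply: nogap; exists n.+1%:R^-1 => [|p sp far].
    by rewrite invr_gt0 ltr0n.
  by rewrite leNgt; apply/negP => hlt; apply: hn; exists p.
have [u hu] := choice seq_small.
have [p sp near_p] := @simplex_cluster u (fun n => let: And3 s _ _ := hu n in s).
have hp0 : h p = 0.
  apply/le_anti; rewrite h_ge0 // andbT; apply/ler_addgt0Pr => e e0.
  rewrite add0r; have e20 : 0 < e / 2 by rewrite divr_gt0.
  have [N hN] : exists N : nat, (e / 2)^-1 < N%:R.
    exists (Num.Def.archi_bound (e / 2)^-1).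
    by apply: archi_boundP; rewrite invr_ge0 ltW.
  have [n Nn hn] := near_p (e / 2) N e20; have [sun _ hun] := hu n.
  have inv_le : n.+1%:R^-1 <= e / 2 :> R.
    rewrite invf_ple ?posrE ?ltr0n //.
    by apply: le_trans (ltW hN) _; rewrite ler_nat leqW.
  have small_hun := lt_le_trans hun inv_le; clear hun inv_le hN.
  have := h_lip p (u n) sp sun; rewrite norm1C; lra.
have [n _ hn] := near_p eps 0%N eps0; have [_ far _] := hu n.
have := le_trans far (dist1_le_norm1 (u n) (conj sp hp0)).
by rewrite lee_fin leNgt hn.
Qed.

End SimplexCompactness.

Section Game.
Variables (R : realType) (k : nat) (Z : finType) (Sig : eqType)
  (L : 'I_k -> Z -> R) (S : 'I_k -> Z -> Sig).
Hypothesis L01 : forall a z, 0 <= L a z <= 1.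
Implicit Types (pi : 'I_k -> R) (x y : Z -> R).

Definition action_loss (a : 'I_k) y := \sum_z y z * L a z.

Lemma lossp_action_loss pi y : lossp L pi y = \sum_a pi a * action_loss a y.
Proof.
apply: eq_bigr => a _; rewrite mulr_sumr; apply: eq_bigr => z _; ring.
Qed.

Lemma action_loss_bounds a y : simplex y -> 0 <= action_loss a y <= 1.
Proof.
move=> [y0 y1]; rewrite -y1; apply/andP; split.
  by apply: sumr_ge0 => z _; rewrite mulr_ge0 //; case/andP: (L01 a z).
by apply: ler_sum => z _; rewrite ler_piMr //; case/andP: (L01 a z).
Qed.

Lemma lossp_bounds pi y : simplex pi -> simplex y -> 0 <= lossp L pi y <= 1.
Proof.
move=> [p0 p1] sy; rewrite lossp_action_loss -p1; apply/andP; split.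
  apply: sumr_ge0 => a _.
  by rewrite mulr_ge0 //; case/andP: (action_loss_bounds a sy).
apply: ler_sum => a _.
by rewrite ler_piMr //; case/andP: (action_loss_bounds a sy).
Qed.

Lemma lossp_lipschitz pi pi' y : simplex y ->
  lossp L pi y <= lossp L pi' y + norm1 pi pi'.
Proof.
move=> sy; rewrite !lossp_action_loss /norm1 -big_split; apply: ler_sum => a _ /=.
have := action_loss_bounds a sy; have := ler_norm (pi a - pi' a).
have := normr_ge0 (pi a - pi' a); nra.
Qed.

Lemma lossp_mix pi t y1 y2 :
  lossp L pi (mix t y1 y2) = t * lossp L pi y1 + (1 - t) * lossp L pi y2.
Proof.
rewrite !lossp_action_loss !mulr_sumr -big_split; apply: eq_bigr => a _ /=.
rewrite /action_loss /mix !mulr_sumr -!big_split; apply: eq_bigr => z _ /=.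
ring.
Qed.

Lemma sigrel_mix t y1 y2 x1 x2 : sigrel S y1 x1 -> sigrel S y2 x2 ->
  sigrel S (mix t y1 y2) (mix t x1 x2).
Proof. by move=> h1 h2 a s; rewrite /mix !big_split /= -!mulr_sumr h1 h2. Qed.

Lemma has_sup_Vf pi x : simplex pi -> simplex x ->
  has_sup [set lossp L pi y | y in [set y | simplex y /\ sigrel S y x]].
Proof.
move=> spi sx; split; first by exists (lossp L pi x), x.
by exists 1 => _ [y [sy _] <-]; case/andP: (lossp_bounds spi sy).
Qed.

Lemma lossp_le_Vf pi x y : simplex pi -> simplex x -> simplex y -> sigrel S y x ->
  lossp L pi y <= Vf L S pi x.
Proof.
move=> spi sx sy yx; have [_ ub] := has_sup_Vf spi sx.
by apply: (ub_le_sup ub); exists y.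
Qed.

Lemma Vf_le pi x M : simplex x ->
  (forall y, simplex y -> sigrel S y x -> lossp L pi y <= M) -> Vf L S pi x <= M.
Proof.
move=> sx hM; apply: ge_sup; first by exists (lossp L pi x), x.
by move=> _ [y [sy yx] <-]; apply: hM.
Qed.

Lemma Vf_ge0 pi x : simplex pi -> simplex x -> 0 <= Vf L S pi x.
Proof.
move=> spi sx; apply: le_trans (lossp_le_Vf spi sx sx (fun _ _ => erefl)).
by case/andP: (lossp_bounds spi sx).
Qed.

Lemma Vf_lipschitz pi pi' x : simplex pi' -> simplex x ->
  Vf L S pi x <= Vf L S pi' x + norm1 pi pi'.
Proof.
move=> spi' sx; apply: Vf_le => // y sy yx.
by apply: le_trans (lossp_lipschitz pi pi' sy) _; rewrite lerD2r lossp_le_Vf.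
Qed.

(* Mixing near-optimal witnesses for [x1] and [x2] gives a witness for the mixture. *)
Lemma Vf_concave pi t x1 x2 : simplex pi -> 0 <= t <= 1 ->
  simplex x1 -> simplex x2 ->
  t * Vf L S pi x1 + (1 - t) * Vf L S pi x2 <= Vf L S pi (mix t x1 x2).
Proof.
move=> spi t01 sx1 sx2; apply/ler_addgt0Pr => e e0.
have [_ [y1 [sy1 yx1] <-] hy1] := sup_adherent e0 (has_sup_Vf spi sx1).
have [_ [y2 [sy2 yx2] <-] hy2] := sup_adherent e0 (has_sup_Vf spi sx2).
have := lossp_le_Vf spi (simplex_mix t01 sx1 sx2) (simplex_mix t01 sy1 sy2)
  (sigrel_mix t yx1 yx2).
rewrite lossp_mix; move: hy1 hy2; rewrite -/(Vf L S pi x1) -/(Vf L S pi x2).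
case/andP: t01; nra.
Qed.

Lemma Vstar_le_Vf pi x : simplex pi -> simplex x -> Vstar L S x <= Vf L S pi x.
Proof.
move=> spi sx; apply: ge_inf; last by exists pi.
by exists 0 => _ [p sp <-]; exact: Vf_ge0.
Qed.

Lemma Delta_ge0 pi x : simplex pi -> simplex x -> 0 <= Delta L S pi x.
Proof. by move=> spi sx; rewrite subr_ge0 Vstar_le_Vf. Qed.

Lemma Delta_lipschitz pi pi' x : simplex pi' -> simplex x ->
  Delta L S pi x <= Delta L S pi' x + norm1 pi pi'.
Proof. by move=> spi' sx; rewrite /Delta addrAC lerD2r Vf_lipschitz. Qed.

End Game.

(* For [t <= 1/2] the anchor term [(1 - t) d] dominates; otherwise the bound at [b] (weight [Db]) does. *)
Lemma ray_estimate (R : realType) (c c' d t Db Dx hb hx0 hx : R) :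
  0 < c' -> c' <= d / 8 -> c' <= c / 2 -> 0 < t <= 1 -> 0 <= Db <= 2 ->
  c * Db <= hb -> d <= hx0 -> t * hb + (1 - t) * hx0 <= hx ->
  Dx <= 2 * (1 - t) + Db -> c' * Dx <= hx.
Proof.
move=> c'0 c'd c'c /andP[t0 t1] /andP[Db0 Db2] hb_ge hx0_ge conc Dx_le.
have c0 : 0 < c by lra.
have hb0 : 0 <= hb by apply: le_trans hb_ge; rewrite mulr_ge0 // ltW.
have lhs : c' * Dx <= c' * (2 * (1 - t) + Db) by apply: ler_wpM2l => //; exact: ltW.
have hx0_t : (1 - t) * d <= (1 - t) * hx0 by apply: ler_wpM2l; rewrite // subr_ge0.
have [t_small|t_big] := leP t (1 / 2).
  have : c' * (2 * (1 - t) + Db) <= c' * 4 by apply: ler_wpM2l; [exact: ltW | lra].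
  have : 0 <= t * hb by rewrite mulr_ge0 // ltW.
  nra.
have : c' * Db <= c / 2 * Db by apply: ler_wpM2r.
have : t * (c * Db) <= t * hb by apply: ler_wpM2l => //; exact: ltW.
have : 0 <= (t - 1 / 2) * (c * Db) by apply: mulr_ge0; [lra | apply: mulr_ge0; lra].
nra.
Qed.

Section Polytope.
Variables (R : realType) (Z I : finType) (a : I -> Z -> R).
Implicit Types (x y b : Z -> R) (T : {set Z + I}).

(* Constraint [inl z] is [0 <= x z] and constraint [inr j] is [a j . x <= 0]. *)
Definition constraint (i : Z + I) : Z -> R :=
  match i with
  | inl z => fun t => if t == z then -1 else 0
  | inr j => a j
  end.

Definition polytope : set (Z -> R) :=
  [set x | \sum_z x z = 1 /\ forall i, dotp (constraint i) x <= 0].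

Lemma dotp_constraint_inl z x : dotp (constraint (inl z)) x = - x z.
Proof.
rewrite /dotp /= (eq_bigr (fun t => if t == z then - x t else 0)).
  by rewrite -big_mkcond big_pred1_eq.
by move=> t _; case: eqP => _; ring.
Qed.

Lemma polytopeE x : polytope x <-> simplex x /\ forall j, dotp (a j) x <= 0.
Proof.
split=> [[x1 hx]|[[x0 x1] hx]]; last first.
  by split=> // -[z|j]; [rewrite dotp_constraint_inl oppr_le0 | exact: hx].
split=> [|j]; last exact: hx (inr j).
by split=> // z; have := hx (inl z); rewrite dotp_constraint_inl oppr_le0.
Qed.

Lemma polytope_simplex x : polytope x -> simplex x.
Proof. by case/polytopeE. Qed.

Lemma polytope_mix t x y : 0 <= t <= 1 -> polytope x -> polytope y ->
  polytope (mix t x y).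
Proof.
move=> /andP[t0 t1] [x1 hx] [y1 hy]; split; first by rewrite sum_mix x1 y1; ring.
by move=> i; rewrite dotp_mix; have := hx i; have := hy i; nra.
Qed.

Definition tight x : {set Z + I} := [set i | dotp (constraint i) x == 0].

Definition slack x : nat := #|~: tight x|.

Lemma tight_lt0 i x : polytope x -> i \notin tight x -> dotp (constraint i) x < 0.
Proof. by move=> [_ hx]; rewrite inE lt_neqAle hx andbT. Qed.

Definition face_normal T : Z -> R := fun t => \sum_(i in T) constraint i t.

Lemma dotp_face_normal T y :
  dotp (face_normal T) y = \sum_(i in T) dotp (constraint i) y.
Proof.
rewrite /dotp /face_normal (eq_bigr (fun t => \sum_(i in T) constraint i t * y t)).
  exact: exchange_big.
by move=> t _; rewrite mulr_suml.
Qed.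

Definition face_of T : set (Z -> R) :=
  polytope `&` [set y | dotp (face_normal T) y = 0].

Lemma face_face_of T : face polytope (face_of T).
Proof.
exists (face_normal T), 0; split=> // y [_ hy].
by rewrite dotp_face_normal; apply: sumr_le0 => i _.
Qed.

Lemma face_ofP T y : polytope y ->
  face_of T y <-> forall i, i \in T -> dotp (constraint i) y = 0.
Proof.
move=> py; split=> [[_ /=] | hT]; last by split=> //=; rewrite dotp_face_normal big1.
rewrite dotp_face_normal => sum0 i iT.
have sumN0 : \sum_(j in T) - dotp (constraint j) y = 0 by rewrite sumrN sum0 oppr0.
have N_ge0 j : j \in T -> 0 <= - dotp (constraint j) y by rewrite oppr_ge0 => _; case: py.
by apply/eqP; rewrite -oppr_eq0; apply/eqP/(psumr_eq0P N_ge0 sumN0).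
Qed.

Lemma face_of_tight x : polytope x -> face_of (tight x) x.
Proof. by move=> px; apply/face_ofP => // i; rewrite inE => /eqP. Qed.

(* Non-tight constraints are strict at [x], so they survive small moves in the
   affine span of the tight ones. *)
Lemma polytope_nbhs x : polytope x -> exists2 e, 0 < e &
  forall y, \sum_z y z = 1 -> (forall i, i \in tight x -> dotp (constraint i) y = 0) ->
    norm1 x y < e -> polytope y.
Proof.
move=> px; pose B i := \sum_t `|constraint i t| + 1.
have B0 i : 0 < B i by rewrite ltr_wpDl // sumr_ge0.
exists (\big[Order.min/1]_(i | i \notin tight x) (- dotp (constraint i) x / B i)).
  by apply: lt_bigmin => // i /(tight_lt0 px) ?; rewrite divr_gt0 // oppr_gt0.
move=> y y1 hT xy; split=> // i; have [/hT -> //|ntight] := boolP (i \in tight x).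
have := lt_le_trans xy (bigmin_le_cond _ (fun j => - dotp (constraint j) x / B j) ntight).
rewrite ltr_pdivlMr // mulrC => /ltW.
have := dotpB_le (constraint i) x y; rewrite -/(B i); lra.
Qed.

Lemma sum_eq_dotp y : \sum_z y z = dotp (fun _ => 1) y.
Proof. by apply: eq_bigr => z _; rewrite mul1r. Qed.

Lemma relint_face_of_tight x : polytope x -> relint (face_of (tight x)) x.
Proof.
move=> px; split; first exact: face_of_tight.
have [e e0 near_x] := polytope_nbhs px; exists e; split=> // y affy xy.
have tight_y i : i \in tight x -> dotp (constraint i) y = 0.
  move=> iT; apply: aff_dotp affy => p [pp Fp].
  by apply: (face_ofP (tight x) pp).1.
have py : polytope y.
  apply: near_x tight_y xy; rewrite sum_eq_dotp.
  by apply: aff_dotp affy => p [[p1 _] _]; rewrite -sum_eq_dotp.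
by apply/face_ofP.
Qed.

(* Each point of the face lies on a segment through [x] which extends a little
   beyond [x] inside the polytope. *)
Lemma concave_vanish_face (h : (Z -> R) -> R) x x' :
  concave_on polytope h -> (forall y, polytope y -> 0 <= h y) ->
  polytope x -> h x = 0 -> face_of (tight x) x' -> h x' = 0.
Proof.
move=> hconc h_ge0 px hx0 Fx'; have [px' _] := Fx'.
have tight_x' := (face_ofP (tight x) px').1 Fx'.
have [e e0 near_x] := polytope_nbhs px.
pose d := norm1 x x'; have d0 : 0 <= d := norm1_ge0 x x'.
pose s := e / (2 * (d + 1)).
have s0 : 0 < s by rewrite divr_gt0 // mulr_gt0 // ltr_pwDr.
have sd : s * d < e by rewrite /s mulrAC ltr_pdivrMr ?mulr_gt0 ?ltr_pwDr //; nra.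
pose x'' := mix (1 + s) x x'.
have px'' : polytope x''.
  apply: near_x.
  - by rewrite sum_mix px.1 px'.1; ring.
  - move=> i iT; rewrite dotp_mix tight_x' //.
    by move: iT; rewrite inE => /eqP ->; ring.
  - apply: le_lt_trans sd; rewrite /d /norm1 mulr_sumr; apply: ler_sum => z _.
    rewrite (_ : x z - x'' z = s * (x' z - x z)) /x'' /mix; last by ring.
    by rewrite normrM gtr0_norm // distrC.
pose t := (1 + s)^-1.
have s1 : 0 < 1 + s by rewrite ltr_pwDr.
have t0 : 0 < t by rewrite invr_gt0.
have t1 : t < 1 by rewrite invf_lt1 // ltrDl.
have mix_x : mix t x'' x' = x.
  by apply: funext => z; rewrite /mix /x'' /mix /t; field; rewrite gt_eqF.
have t01 : 0 <= t <= 1 by rewrite !ltW.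
have := hconc t x'' x' t01 px'' px'; rewrite mix_x hx0.
have := h_ge0 _ px''; have := h_ge0 _ px'.
move=> ge0' ge0'' conc; apply/le_anti; rewrite ge0' andbT; nra.
Qed.

(* Moving from [x0] through [x] until a new constraint becomes tight: the
   first one hit is a constraint that increases strictly along the ray, and
   some sign constraint does since [x] and [x0] have the same total mass. *)
Lemma polytope_ray x0 x : polytope x0 -> polytope x -> tight x0 = tight x ->
  x != x0 -> exists b t, [/\ polytope b, (slack b < slack x)%N, 0 < t <= 1 &
    x = mix t b x0].
Proof.
move=> px0 px tight_eq neq; pose g i y := dotp (constraint i) y.
have [z xz] : exists z, x z < x0 z.
  apply: contrapT => no_z; move/eqP: neq; apply; apply: funext => z'.
  have ge0 z : true -> 0 <= x z - x0 z.
    by move=> _; rewrite subr_ge0 leNgt; apply/negP => lt; apply: no_z; exists z.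
  have sum0 : \sum_z (x z - x0 z) = 0 by rewrite sumrB px.1 px0.1 subrr.
  by apply/eqP; rewrite -subr_eq0; apply/eqP/(psumr_eq0P ge0 sum0).
pose P i := (i \notin tight x) && (g i x0 < g i x).
pose lam i := - g i x0 / (g i x - g i x0).
have Pz : P (inl z).
  have x0z : 0 < x0 z by apply: le_lt_trans xz; case: (polytope_simplex px) => + _.
  by rewrite /P /g !dotp_constraint_inl ltrN2 xz -tight_eq inE dotp_constraint_inl
    oppr_eq0 gt_eqF.
have [i1 /andP[nt1 lt1] lam_min] : exists2 i, P i & forall j, P j -> lam i <= lam j.
  by case: (arg_minP lam Pz) => i; exists i.
have gx1 : g i1 x < 0 by exact: tight_lt0.
have dpos : 0 < g i1 x - g i1 x0 by rewrite subr_gt0.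
set La := lam i1.
have La1 : 1 < La by rewrite /La /lam ltr_pdivlMr // mul1r; lra.
pose b := mix La x x0.
have gb i : g i b = La * g i x + (1 - La) * g i x0 by rewrite /g dotp_mix.
have tight_g0 i : i \in tight x -> g i x = 0 /\ g i x0 = 0.
  by move=> iT; split; apply/eqP; [move: iT | move: iT; rewrite -tight_eq];
    rewrite inE.
have pb : polytope b.
  split=> [|i]; first by rewrite sum_mix px.1 px0.1; ring.
  rewrite -/(g i b) gb; have [/tight_g0 [-> ->]|nti] := boolP (i \in tight x).
    by rewrite !mulr0 addr0.
  have gi0 : g i x0 < 0 by apply: tight_lt0; rewrite ?tight_eq.
  have [lti|] := ltP (g i x0) (g i x); last by nra.
  have := lam_min i; rewrite /P nti lti => /(_ isT) La_le.
  suff : La * (g i x - g i x0) <= - g i x0 by lra.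
  by rewrite -ler_pdivlMr ?subr_gt0.
have gb1 : g i1 b = 0.
  have : La * (g i1 x - g i1 x0) = - g i1 x0 by rewrite /La /lam divfK // gt_eqF.
  rewrite gb; lra.
exists b, La^-1; split=> //.
- apply: proper_card; apply/properP; split.
    apply/fintype.subsetP => i; rewrite !inE; apply: contra => /eqP gi.
    have [] := tight_g0 i; first by rewrite inE gi.
    by move=> gx gx0; rewrite -/(g i b) gb gx gx0 !mulr0 addr0.
  exists i1; first by rewrite inE.
  by rewrite !inE negbK; apply/eqP; exact: gb1.
- have La0 : 0 < La by lra.
  by rewrite invr_gt0 La0 invf_le1 // ltW.
- apply: funext => t; rewrite /b /mix; field; rewrite gt_eqF //; lra.
Qed.

Section LowerBound.
Variables (H : set ((Z -> R) -> R)) (D : (Z -> R) -> R).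
Hypothesis H_concave : forall h, H h -> concave_on polytope h.
Hypothesis H_ge0 : forall h x, H h -> polytope x -> 0 <= h x.
Hypothesis D_lipschitz : forall x y, polytope x -> polytope y -> D x <= norm1 x y + D y.
Hypothesis D_bounds : forall x, polytope x -> 0 <= D x <= 2.

Lemma slack_induction (d : R) : 0 < d ->
  (forall x, polytope x -> D x = 0 \/
    exists x0, [/\ polytope x0, tight x0 = tight x & forall h, H h -> d <= h x0]) ->
  forall n, exists2 c, 0 < c & forall h x, H h -> polytope x -> (slack x <= n)%N ->
    c * D x <= h x.
Proof.
move=> d0 anchor; elim=> [|n [c c0 IH]].
  exists 1 => // h x _ px; rewrite leqn0 cards_eq0 => /eqP /setP no_slack.
  have x0 z : x z = 0.
    have := no_slack (inl z); rewrite !inE dotp_constraint_inl oppr_eq0.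
    by move/negbFE/eqP.
  by have := px.1; rewrite big1 // => /esym/eqP; rewrite oner_eq0.
pose c' := Order.min (d / 8) (c / 2).
have c'0 : 0 < c' by rewrite lt_min !divr_gt0.
have c'd : c' <= d / 8 by rewrite ge_min lexx.
have c'c : c' <= c / 2 by rewrite ge_min lexx orbT.
exists c' => // h x Hh px slack_x.
have [slack_le|slack_gt] := leqP (slack x) n.
  have Dx0 : 0 <= D x by case/andP: (D_bounds px).
  have : c' * D x <= c * D x by apply: ler_wpM2r => //; lra.
  by have := IH h x Hh px slack_le; lra.
have [->|[x0 [px0 tight_eq hx0_ge]]] := anchor x px.
  by rewrite mulr0 H_ge0.
have [x_eq|neq] := eqVneq x x0.
  have Dx2 : D x <= 2 by case/andP: (D_bounds px).
  have := ler_wpM2l (ltW c'0) Dx2; have := hx0_ge h Hh; rewrite x_eq; lra.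
have [b [t [pb slack_b t01 ->]]] := polytope_ray px0 px tight_eq neq.
have tt01 : 0 <= t <= 1 by case/andP: t01 => /ltW -> ->.
apply: (ray_estimate c'0 c'd c'c t01 (D_bounds pb) (IH h b Hh pb _) (hx0_ge h Hh)).
- by rewrite -ltnS (leq_trans slack_b).
- exact: H_concave.
- apply: le_trans (D_lipschitz (polytope_mix tt01 pb px0) pb) _.
  rewrite lerD2r norm1_mixl // mulrC; apply: ler_wpM2r.
    by case/andP: tt01 => _; rewrite subr_ge0.
  by rewrite norm1C; apply: norm1_simplex_le2; exact: polytope_simplex.
Qed.

Lemma polytope_lower_bound :
  (forall T, exists2 d, 0 < d & forall x, polytope x -> tight x = T -> D x = 0 \/
    exists x0, [/\ polytope x0, tight x0 = T & forall h, H h -> d <= h x0]) ->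
  exists2 c, 0 < c & forall h x, H h -> polytope x -> c * D x <= h x.
Proof.
move=> face_gap; have [|d d0 gap] := fin_uniform_pos _ face_gap.
  move=> T d d' d'0 d'd gapT x px Tx.
  have [|[x0 [px0 Tx0 hx0]]] := gapT x px Tx; [by left | right; exists x0].
  by split=> // h Hh; apply: le_trans d'd (hx0 h Hh).
have [|c c0 hc] := slack_induction d0 _ #|{: Z + I}|.
  by move=> x px; exact: gap px erefl.
by exists c => // h x Hh px; apply: hc; rewrite // max_card.
Qed.

End LowerBound.
End Polytope.

Section Cells.
Variables (R : realType) (k : nat) (Z : finType) (Sig : eqType)
  (L : 'I_k -> Z -> R) (S : 'I_k -> Z -> Sig) (m : nat) (w : 'I_m -> Z -> R).
Hypothesis L01 : forall a z, 0 <= L a z <= 1.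
Hypothesis w_rep : represents L S w.
Implicit Types (pi : 'I_k -> R) (x : Z -> R).

Definition cell_constraint (al : 'I_m) : 'I_m -> Z -> R :=
  fun be t => w al t - w be t.

Lemma Vm_dotp x al : Vm w x al = dotp (w al) x.
Proof. by apply: eq_bigr => z _; rewrite mulrC. Qed.

Lemma dotp_cell_constraint al be x :
  dotp (cell_constraint al be) x = Vm w x al - Vm w x be.
Proof. by rewrite !Vm_dotp /dotp -sumrB; apply: eq_bigr => z _; rewrite mulrBl. Qed.

Lemma cell_polytope al : cell L S w al = polytope (cell_constraint al).
Proof.
apply/seteqP; split=> x.
  move=> [sx Vx]; apply/polytopeE; split=> // be.
  by rewrite dotp_cell_constraint subr_le0 -Vx; case: (w_rep sx).
move=> /polytopeE [sx hx]; split=> //; have [[al0 V0] Vle] := w_rep sx.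
apply/le_anti; rewrite Vle V0 -subr_le0 -dotp_cell_constraint.
exact: hx.
Qed.

Lemma Delta_concave_cell al pi : simplex pi ->
  concave_on (cell L S w al) (Delta L S pi).
Proof.
move=> spi t x y t01 cx cy; have cxy : cell L S w al (mix t x y).
  by rewrite cell_polytope in cx cy *; exact: polytope_mix.
rewrite /Delta cxy.2 cx.2 cy.2 !Vm_dotp dotp_mix.
by have := Vf_concave S L01 spi t01 cx.1 cy.1; lra.
Qed.

Lemma Nset_face_of_tight al x0 x : cell L S w al x0 ->
  face_of (cell_constraint al) (tight (cell_constraint al) x0) x ->
  Nset L S x0 `<=` Nset L S x.
Proof.
rewrite cell_polytope => px0 Fx pi [spi D0]; split=> //.
apply: (concave_vanish_face _ _ px0 D0 Fx).
  by rewrite -cell_polytope; exact: Delta_concave_cell.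
by move=> y /polytope_simplex; exact: Delta_ge0.
Qed.

Lemma Delta_gap x0 eps : simplex x0 -> 0 < eps ->
  exists2 d : R, 0 < d & forall pi, simplex pi ->
    (eps%:E <= dist1 pi (Nset L S x0))%E -> d <= Delta L S pi x0.
Proof.
move=> sx0 eps0; apply: simplex_gap eps0 _ _ => [pi spi|pi pi' _ spi'].
  exact: Delta_ge0.
exact: Delta_lipschitz.
Qed.

End Cells.

Section LowerBoundOnCells.
Variables (R : realType) (k : nat) (Z : finType) (Sig : eqType)
  (L : 'I_k -> Z -> R) (S : 'I_k -> Z -> Sig) (m : nat) (w : 'I_m -> Z -> R)
  (eps : R) (G : set (set (Z -> R))).
Hypothesis L01 : forall a z, 0 <= L a z <= 1.
Hypothesis w_rep : represents L S w.
Hypothesis eps0 : 0 < eps.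
Hypothesis U0 : Uset L S w G !=set0.

Let U := Uset L S w G.
Let distU x := fine (dist1 x U).
Let DeltaPi := [set Delta L S pi | pi in PiSet L S eps G].

Lemma Uset_simplex : U `<=` @simplex R Z.
Proof. by move=> u [F [[al [a [b [_ ->]]]] _] [[]]]. Qed.

Lemma faces_face_of al T : faces L S w (face_of (cell_constraint w al) T).
Proof. by exists al; rewrite cell_polytope //; exact: face_face_of. Qed.

(* A face outside [G] lies in [U]; on a face in [G], every [pi] in [Pi] is
   [eps]-far from [N] of the face, hence from [N] at any relative interior
   point [x0], and [Delta(., x0)] is bounded below there. *)
Lemma face_gap al T : exists2 d, 0 < d & forall x,
  polytope (cell_constraint w al) x -> tight (cell_constraint w al) x = T ->
  distU x = 0 \/ exists x0, [/\ polytope (cell_constraint w al) x0,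
    tight (cell_constraint w al) x0 = T & forall h, DeltaPi h -> d <= h x0].
Proof.
set F := face_of (cell_constraint w al) T.
have [GF|nGF] := pselect (G F); last first.
  exists 1 => // x px Tx; left; apply: fine_dist1_in => //.
  by exists F; [split=> //; exact: faces_face_of | rewrite /F -Tx; exact: face_of_tight].
have [[x0 [px0 Tx0]]|] := pselect (exists x0,
    polytope (cell_constraint w al) x0 /\ tight (cell_constraint w al) x0 = T);
    last by move=> none; exists 1 => // x px Tx; exfalso; apply: none; exists x.
have cx0 : cell L S w al x0 by rewrite cell_polytope.
have [d d0 gap] := Delta_gap S L01 (polytope_simplex px0) eps0.
exists d => // x _ _; right; exists x0; split=> // _ [pi [spi far] <-].
apply: gap => //; have rx0 : relint F x0 by rewrite /F -Tx0; exact: relint_face_of_tight.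
apply: le_trans (far F GF (ex_intro _ x0 rx0.1)) _; apply: le_dist1.
apply: (Nset_face_of_tight L01 w_rep cx0); rewrite Tx0.
by have [] := xgetI (fun _ => 0) rx0.
Qed.

Lemma cell_lower_bound al : exists2 c, 0 < c & forall x pi,
  cell L S w al x -> PiSet L S eps G pi -> c * distU x <= Delta L S pi x.
Proof.
have [||||c c0 bound] := @polytope_lower_bound R Z 'I_m (cell_constraint w al)
  DeltaPi distU _ _ _ _ (face_gap al).
- by move=> _ [pi [spi _] <-]; rewrite -(cell_polytope w_rep); exact: Delta_concave_cell.
- by move=> _ x [pi [spi _] <-] /polytope_simplex; exact: Delta_ge0.
- by move=> x y _ _; exact: fine_dist1_lipschitz.
- move=> x /polytope_simplex sx.
  by rewrite fine_dist1_ge0 // fine_dist1_le2 //; exact: Uset_simplex.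
exists c => // x pi; rewrite (cell_polytope w_rep) => px Ppi.
by apply: (bound (Delta L S pi) x) => //; exists pi.
Qed.

End LowerBoundOnCells.

Theorem lemma10 (R : realType) (k : nat) (Z : finType) (Sig : eqType)
  (L : 'I_k -> Z -> R) (S : 'I_k -> Z -> Sig)
  (m : nat) (w : 'I_m -> Z -> R) (eps : R) (G : set (set (Z -> R))) :
  (forall a z, 0 <= L a z <= 1) ->
  minimal_rep L S w ->
  0 < eps ->
  G `<=` faces L S w ->
  Uset L S w G !=set0 ->
  exists c : R, 0 < c /\
    forall x : Z -> R, simplex x ->
      (c%:E * gfun L S w G x <= ffun L S eps G x)%E.
Proof.
move=> L01 [w_rep _] eps0 _ U0.
have [|c c0 bound] := fin_uniform_pos _ (cell_lower_bound L01 w_rep eps0 U0).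
  move=> al c c' c'0 c'c bound_al x pi cx Ppi.
  apply: le_trans (bound_al x pi cx Ppi); apply: ler_wpM2r c'c.
  exact: fine_dist1_ge0.
exists c; split=> // x sx; have [[al Vx] _] := w_rep x sx.
rewrite /gfun (dist1E U0); apply: le_ereal_inf_tmp => _ [pi Ppi <-].
by rewrite -EFinM lee_fin; exact: (bound al x pi (conj sx Vx) Ppi).
Qed.
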